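(* Let $P(X)=\sum_{i=0}^d a_iX^i$ be a polynomial with coefficients $a_i$ in $\mathbb{D}$, and let $A,B\in\mathbb{D}$ with $P(A)=P(B)$. Then $A=B$ provided either $a_1\in\mathbb{D}^*$, or there exists $i>1$ with $a_i\in\mathbb{D}^*$ and $A\in\mathbb{D}^*$.
   Context: $\mathbb{D}$ is the set of finite dynamical systems (FDSs), i.e. functions $A:S_A\to S_A$ on finite sets, considered up to isomorphism of functional graphs. The sum $A+B$ acts on the disjoint union $S_A\sqcup S_B$ as $A$ on $S_A$ and $B$ on $S_B$; the product $AB$ acts on $S_A\times S_B$ by $(a,b)\mapsto(A(a),B(b))$. $X^i$ denotes the $i$-fold product, $X^0$ is the one-state FDS with a fixpoint, and $P(A)=\sum_i a_iA^i$ is evaluated with these operations. $\mathbb{D}^*$ is the set of FDSs having a fixpoint (a state $s$ with $A(s)=s$). *)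

From mathcomp Require Import all_boot.
Set Implicit Arguments. Unset Strict Implicit. Unset Printing Implicit Defensive.

Record FDS : Type := mkFDS { carrier : finType; dyn : carrier -> carrier }.
Arguments dyn : clear implicits.

Definition fds_iso (A B : FDS) : Prop :=
  exists h : carrier A -> carrier B,
    bijective h /\ forall x, h (dyn A x) = dyn B (h x).

(* The FDS has a fixpoint (membership in D^* ). *)
Definition has_fixpoint (A : FDS) : Prop := exists s, dyn A s = s.

Definition fds0 : FDS := @mkFDS void id.
Definition fds1 : FDS := @mkFDS unit id.

Definition fds_add (A B : FDS) : FDS :=
  @mkFDS (carrier A + carrier B)%type
    (fun s => match s with inl a => inl (dyn A a) | inr b => inr (dyn B b) end).

Definition fds_mul (A B : FDS) : FDS :=
  @mkFDS (carrier A * carrier B)%type (fun s => (dyn A s.1, dyn B s.2)).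

Fixpoint fds_pow (A : FDS) (n : nat) : FDS :=
  match n with 0 => fds1 | n'.+1 => fds_mul A (fds_pow A n') end.

Fixpoint poly_eval_from (a : seq FDS) (A : FDS) (k : nat) : FDS :=
  match a with
  | [::] => fds0
  | c :: a' => fds_add (fds_mul c (fds_pow A k)) (poly_eval_from a' A k.+1)
  end.

Definition poly_eval (a : seq FDS) (A : FDS) : FDS := poly_eval_from a A 0.

From mathcomp Require Import all_boot.
Set Implicit Arguments. Unset Strict Implicit. Unset Printing Implicit Defensive.

(* For a connected C, every homomorphism C -> X + Y lands in X or in Y, so the
   number hom(C, X) of homomorphisms C -> X is additive in X; it is always
   multiplicative. Hence hom(C, P(X)) = p(hom(C, X)), where p has the natural
   coefficients hom(C, a_i); if some a_i with i >= 1 has a fixpoint then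
   hom(C, a_i) >= 1 and p is strictly increasing, so hom(C, A) = hom(C, B) for
   every connected C, and then for every C because hom(C1 + C2, X) =
   hom(C1, X) * hom(C2, X). Following Lovász, sorting homomorphisms by their
   kernel gives hom(C, X) = inj(C, X) + the sum of inj(C', X) over the proper
   quotients C' of C, so by induction on |C| the numbers of injective
   homomorphisms agree as well; an injective homomorphism A -> B together with
   one B -> A is an isomorphism. *)

Lemma fds_iso_sym (A B : FDS) : fds_iso A B -> fds_iso B A.
Proof.
case=> k [[k' kK k'K] k_hom]; exists k'; split; first by exists k.
by move=> y; apply: (can_inj kK); rewrite k_hom !k'K.
Qed.

Section Homomorphisms.
Variables C X : FDS.

Definition is_hom (h : carrier C -> carrier X) : bool :=
  [forall x, h (dyn C x) == dyn X (h x)].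

Lemma is_homP h : reflect (forall x, h (dyn C x) = dyn X (h x)) (is_hom h).
Proof. by apply: (iffP forallP) => h_hom x; apply/eqP. Qed.

Definition nhom : nat := #|[set h : {ffun carrier C -> carrier X} | is_hom h]|.

Definition ninj : nat :=
  #|[set h : {ffun carrier C -> carrier X} | is_hom h && injectiveb h]|.

End Homomorphisms.

Lemma nhom_le_r (C X Y : FDS) (k : carrier X -> carrier Y) :
  injective k -> (forall x, k (dyn X x) = dyn Y (k x)) -> nhom C X <= nhom C Y.
Proof.
move=> k_inj k_hom.
pose post (h : {ffun carrier C -> carrier X}) : {ffun carrier C -> carrier Y} :=
  [ffun x => k (h x)].
have post_inj : injective post.
  by move=> h1 h2 /ffunP E; apply/ffunP => x; apply: k_inj; have := E x; rewrite !ffunE.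
rewrite /nhom -(card_imset _ post_inj); apply/subset_leq_card/subsetP => _ /imsetP[h + ->].
by rewrite !inE => /is_homP h_hom; apply/is_homP => x; rewrite !ffunE h_hom k_hom.
Qed.

Lemma nhom_le_l (C C' X : FDS) (k : carrier C' -> carrier C) (k' : carrier C -> carrier C') :
  cancel k' k -> (forall x, k (dyn C' x) = dyn C (k x)) -> nhom C X <= nhom C' X.
Proof.
move=> k'K k_hom.
pose pre (h : {ffun carrier C -> carrier X}) : {ffun carrier C' -> carrier X} :=
  [ffun x => h (k x)].
have pre_inj : injective pre.
  by move=> h1 h2 /ffunP E; apply/ffunP => x; have := E (k' x); rewrite !ffunE k'K.
rewrite /nhom -(card_imset _ pre_inj); apply/subset_leq_card/subsetP => _ /imsetP[h + ->].
by rewrite !inE => /is_homP h_hom; apply/is_homP => x; rewrite !ffunE k_hom h_hom.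
Qed.

Lemma nhom_iso_r (C X Y : FDS) : fds_iso X Y -> nhom C X = nhom C Y.
Proof.
move=> XY; have [k [/bij_inj k_inj k_hom]] := XY.
have [k' [/bij_inj k'_inj k'_hom]] := fds_iso_sym XY.
by apply/eqP; rewrite eqn_leq (nhom_le_r _ k_inj k_hom) (nhom_le_r _ k'_inj k'_hom).
Qed.

Lemma nhom_iso_l (C C' X : FDS) : fds_iso C C' -> nhom C X = nhom C' X.
Proof.
move=> CC'; have [k [[k' _ k'K] k_hom]] := CC'.
have [j [[j' _ j'K] j_hom]] := fds_iso_sym CC'.
by apply/eqP; rewrite eqn_leq (nhom_le_l _ j'K j_hom) (nhom_le_l _ k'K k_hom).
Qed.

Lemma nhom_empty (C X : FDS) : #|carrier C| = 0 -> nhom C X = 1.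
Proof.
move=> C0; rewrite /nhom (_ : [set h | _] = setT) ?cardsT ?card_ffun ?C0 //.
by apply/setP => h; rewrite !inE; apply/is_homP => x; have := card0_eq C0 x.
Qed.

Lemma nhom0 (C : FDS) : 0 < #|carrier C| -> nhom C fds0 = 0.
Proof.
by case/card_gt0P => x0 _; apply/eqP; rewrite cards_eq0; apply/eqP/setP => h; case: (h x0).
Qed.

Lemma nhom1 (C : FDS) : nhom C fds1 = 1.
Proof.
rewrite /nhom (_ : [set h | _] = setT) ?cardsT ?card_ffun ?card_unit ?exp1n //.
by apply/setP => h; rewrite !inE; apply/is_homP => x; case: (h _); case: (dyn _ _).
Qed.

Lemma nhom_mul (C X Y : FDS) : nhom C (fds_mul X Y) = nhom C X * nhom C Y.
Proof.
rewrite /nhom -cardsX.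
pose split (h : {ffun carrier C -> carrier (fds_mul X Y)}) :=
  ([ffun x => (h x).1], [ffun x => (h x).2]).
have split_inj : injective split.
  move=> h1 h2 [/ffunP E1 /ffunP E2]; apply/ffunP => x.
  by have := E1 x; have := E2 x; rewrite !ffunE; case: (h1 x) (h2 x) => ? ? [? ?] /= -> ->.
rewrite -(card_imset _ split_inj); apply: eq_card => -[g1 g2]; rewrite !inE /=.
apply/imsetP/andP => [[h + [-> ->]] | [/is_homP g1_hom /is_homP g2_hom]].
  by rewrite inE => /is_homP h_hom; split; apply/is_homP => x; rewrite !ffunE h_hom.
exists [ffun x => (g1 x, g2 x)]; last by congr pair; apply/ffunP => x; rewrite !ffunE.
by rewrite inE; apply/is_homP => x; rewrite !ffunE g1_hom g2_hom.
Qed.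

Lemma nhom_pow (C X : FDS) n : nhom C (fds_pow X n) = nhom C X ^ n.
Proof. by elim: n => [|n IHn] /=; rewrite ?nhom1 // nhom_mul IHn expnS. Qed.

Lemma nhom_add_l (C1 C2 X : FDS) : nhom (fds_add C1 C2) X = nhom C1 X * nhom C2 X.
Proof.
rewrite /nhom -cardsX.
pose restr (h : {ffun carrier (fds_add C1 C2) -> carrier X}) :=
  ([ffun x => h (inl x)], [ffun x => h (inr x)]).
have restr_inj : injective restr.
  move=> h1 h2 [/ffunP E1 /ffunP E2].
  by apply/ffunP => -[x|x]; [have := E1 x | have := E2 x]; rewrite !ffunE.
rewrite -(card_imset _ restr_inj); apply: eq_card => -[g1 g2]; rewrite !inE /=.
apply/imsetP/andP => [[h + [-> ->]] | [/is_homP g1_hom /is_homP g2_hom]].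
  rewrite inE => /is_homP h_hom; split; apply/is_homP => x; rewrite !ffunE.
  - exact: h_hom (inl x).
  - exact: h_hom (inr x).
exists [ffun s => match s with inl x => g1 x | inr x => g2 x end].
  by rewrite inE; apply/is_homP => -[x|x]; rewrite !ffunE /= ?g1_hom ?g2_hom.
by congr pair; apply/ffunP => x; rewrite !ffunE.
Qed.

Definition fds_closed (C : FDS) (S : {set carrier C}) : bool :=
  [forall x, (dyn C x \in S) == (x \in S)].

Definition fds_connected (C : FDS) : bool :=
  [forall S : {set carrier C}, fds_closed S ==> (S == set0) || (S == setT)].

Definition is_inl (T1 T2 : Type) (s : T1 + T2) : bool := if s is inl _ then true else false.

Lemma connected_hom_add_side (C X Y : FDS) (h : carrier C -> carrier (fds_add X Y)) :
  fds_connected C -> is_hom h -> forall x y, is_inl (h x) = is_inl (h y).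
Proof.
move=> C_conn /is_homP h_hom x y.
have S_closed : fds_closed [set z | is_inl (h z)].
  by apply/forallP => z; rewrite !inE h_hom; case: (h z).
have /orP[/eqP S0 | /eqP ST] := implyP (forallP C_conn _) S_closed.
  by move: (in_set0 x) (in_set0 y); rewrite -S0 !inE => -> ->.
by move: (in_setT x) (in_setT y); rewrite -ST !inE => -> ->.
Qed.

Lemma nhom_add (C X Y : FDS) : 0 < #|carrier C| -> fds_connected C ->
  nhom C (fds_add X Y) = nhom C X + nhom C Y.
Proof.
case/card_gt0P => x0 _ C_conn.
pose inl_ (g : {ffun carrier C -> carrier X}) : {ffun carrier C -> carrier (fds_add X Y)} :=
  [ffun x => inl (g x)].
pose inr_ (g : {ffun carrier C -> carrier Y}) : {ffun carrier C -> carrier (fds_add X Y)} :=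
  [ffun x => inr (g x)].
have inl_inj : injective inl_.
  by move=> g1 g2 /ffunP E; apply/ffunP => x; have := E x; rewrite !ffunE => -[].
have inr_inj : injective inr_.
  by move=> g1 g2 /ffunP E; apply/ffunP => x; have := E x; rewrite !ffunE => -[].
pose homs (Z : FDS) := [set h : {ffun carrier C -> carrier Z} | is_hom h].
have homs_split : homs _ = inl_ @: homs X :|: inr_ @: homs Y.
  apply/setP => h; rewrite !inE; apply/idP/idP; last first.
    by case/orP => /imsetP[g + ->]; rewrite inE => /is_homP g_hom;
      apply/is_homP => x; rewrite !ffunE /= g_hom.
  move=> h_hom; have side := connected_hom_add_side C_conn h_hom.
  move/is_homP: h_hom => h_hom; apply/orP; case hx0: (h x0) => [a0|b0]; [left|right].
  - have hL x : h x = inl (if h x is inl a then a else a0).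
      by have := side x x0; rewrite hx0; case: (h x).
    apply/imsetP; exists [ffun x => if h x is inl a then a else a0].
      by rewrite inE; apply/is_homP => x; rewrite !ffunE h_hom (hL x).
    by apply/ffunP => x; rewrite !ffunE -hL.
  - have hR x : h x = inr (if h x is inr b then b else b0).
      by have := side x x0; rewrite hx0; case: (h x).
    apply/imsetP; exists [ffun x => if h x is inr b then b else b0].
      by rewrite inE; apply/is_homP => x; rewrite !ffunE h_hom (hR x).
    by apply/ffunP => x; rewrite !ffunE -hR.
rewrite /nhom -/(homs _) homs_split cardsU (card_imset _ inl_inj) (card_imset _ inr_inj).
suff -> : inl_ @: homs X :&: inr_ @: homs Y = set0.
  by rewrite cards0 subn0.
apply/setP => h; rewrite !inE; apply/negbTE/andP.
by case=> /imsetP[g1 _ ->] /imsetP[g2 _ /ffunP/(_ x0)]; rewrite !ffunE.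
Qed.

Definition fds_restrict (C : FDS) (S : {set carrier C}) : FDS :=
  @mkFDS {x | x \in S} (fun s => insubd s (dyn C (val s))).

Lemma val_dyn_restrict (C : FDS) (S : {set carrier C}) (s : carrier (fds_restrict S)) :
  dyn C (val s) \in S -> val (dyn (fds_restrict S) s) = dyn C (val s).
Proof. exact: insubdK. Qed.

Lemma card_restrict (C : FDS) (S : {set carrier C}) : #|carrier (fds_restrict S)| = #|S|.
Proof. by rewrite card_sig; apply: eq_card => x; rewrite inE. Qed.

Lemma fds_closed_split (C : FDS) (S : {set carrier C}) : fds_closed S ->
  fds_iso (fds_add (fds_restrict S) (fds_restrict (~: S))) C.
Proof.
move=> /forallP S_closed; have S_dyn x : (dyn C x \in S) = (x \in S) by apply/eqP.
pose k (s : carrier (fds_add (fds_restrict S) (fds_restrict (~: S)))) :=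
  match s with inl x => val x | inr x => val x end.
exists k; split.
  apply: inj_card_bij; last by rewrite card_sum !card_restrict cardsC.
  move=> [x|x] [y|y] /= Exy; try congr (_ _); try exact: val_inj;
  by move: (valP x) (valP y); rewrite /= Exy !inE; case: (_ \in S).
by move=> [x|x]; rewrite /= val_dyn_restrict // ?inE S_dyn; move: (valP x); rewrite ?inE.
Qed.

Lemma nhom_eq_of_connected (A B : FDS) :
  (forall C, 0 < #|carrier C| -> fds_connected C -> nhom C A = nhom C B) ->
  forall C, nhom C A = nhom C B.
Proof.
move=> conn_eq C; have [n] := ubnP #|carrier C|; elim: n C => // n IHn C; rewrite ltnS => C_le.
have [C0|C_gt0] := posnP #|carrier C|; first by rewrite !nhom_empty.
have [C_conn|] := boolP (fds_connected C); first exact: conn_eq.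
case/forallPn => S; rewrite negb_imply negb_or => /and3P[S_closed S_ne0 S_neT].
have C_split := fds_iso_sym (fds_closed_split S_closed).
rewrite !(nhom_iso_l _ C_split) !nhom_add_l !IHn // card_restrict; apply: leq_trans _ C_le.
  by rewrite -(cardsC S) -[X in X < _]add0n ltn_add2r card_gt0.
by rewrite -cardsT proper_card // properT.
Qed.

Fixpoint natpoly_eval_from (c : seq nat) (x k : nat) : nat :=
  if c is c0 :: c' then c0 * x ^ k + natpoly_eval_from c' x k.+1 else 0.

Lemma nhom_poly_eval_from (C : FDS) (a : seq FDS) (A : FDS) k :
  0 < #|carrier C| -> fds_connected C ->
  nhom C (poly_eval_from a A k) = natpoly_eval_from (map (nhom C) a) (nhom C A) k.
Proof.
move=> C_gt0 C_conn; elim: a k => [|c a IHa] k /=; first exact: nhom0.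
by rewrite nhom_add // nhom_mul nhom_pow IHa.
Qed.

Lemma natpoly_eval_from_mono (c : seq nat) x y k :
  x <= y -> natpoly_eval_from c x k <= natpoly_eval_from c y k.
Proof.
move=> le_xy; elim: c k => //= c0 c IHc k; rewrite leq_add ?leq_mul //.
by case: k => // k; rewrite leq_exp2r.
Qed.

Lemma natpoly_eval_from_strict (c : seq nat) x y k j :
  0 < k + j -> 0 < nth 0 c j -> x < y ->
  natpoly_eval_from c x k < natpoly_eval_from c y k.
Proof.
move=> + + lt_xy; elim: c k j => [|c0 c IHc] k [|j] //=.
  rewrite addn0 => k_gt0 c0_gt0; rewrite -addSn leq_add //.
    by rewrite ltn_pmul2l // ltn_exp2r.
  exact/natpoly_eval_from_mono/ltnW.
move=> _ cj_gt0; rewrite -addnS leq_add //; last by apply: (IHc _ j); rewrite ?addSn.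
rewrite leq_mul //; case: k => // k; by rewrite leq_exp2r // ltnW.
Qed.

Lemma natpoly_eval_from_inj (c : seq nat) x y k j :
  0 < k + j -> 0 < nth 0 c j ->
  natpoly_eval_from c x k = natpoly_eval_from c y k -> x = y.
Proof.
move=> deg_gt0 cj_gt0 E; case: (ltngtP x y) => // lt;
by have := natpoly_eval_from_strict deg_gt0 cj_gt0 lt; rewrite E ltnn.
Qed.

Lemma nhom_gt0 (C X : FDS) : has_fixpoint X -> 0 < nhom C X.
Proof.
case=> s s_fix; apply/card_gt0P; exists [ffun=> s].
by rewrite inE; apply/is_homP => x; rewrite !ffunE s_fix.
Qed.

Lemma connected_nhom_eq (a : seq FDS) (A B : FDS) i :
  0 < i -> has_fixpoint (nth fds0 a i) ->
  fds_iso (poly_eval a A) (poly_eval a B) ->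
  forall C, 0 < #|carrier C| -> fds_connected C -> nhom C A = nhom C B.
Proof.
move=> i_gt0 ai_fix PAB C C_gt0 C_conn.
have := nhom_iso_r C PAB; rewrite /poly_eval !nhom_poly_eval_from //.
apply: (natpoly_eval_from_inj (j := i)) => //.
have [lt_i_a|le_a_i] := ltnP i (size a); first by rewrite (nth_map fds0) // nhom_gt0.
by move: ai_fix; rewrite nth_default // => -[[]].
Qed.

Definition krep (T : finType) (Z : eqType) (h : T -> Z) (x : T) : T :=
  odflt x [pick y | h y == h x].

Lemma krep_spec (T : finType) (Z : eqType) (h : T -> Z) x : h (krep h x) = h x.
Proof. by rewrite /krep; case: pickP => [y /eqP ->|]. Qed.

Lemma krep_eq (T : finType) (Z : eqType) (h : T -> Z) x y :
  h x = h y -> krep h x = krep h y.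
Proof.
move=> hxy; rewrite /krep hxy; case: pickP => // none.
by have := none y; rewrite /= eqxx.
Qed.

Lemma krep_inj (T : finType) (Z : eqType) (h : T -> Z) x y :
  krep h x = krep h y -> h x = h y.
Proof. by move=> E; rewrite -(krep_spec h x) E krep_spec. Qed.

Lemma eq_krep (T : finType) (Z1 Z2 : eqType) (h1 : T -> Z1) (h2 : T -> Z2) :
  (forall x y, (h1 x == h1 y) = (h2 x == h2 y)) -> krep h1 =1 krep h2.
Proof. by move=> same_ker x; rewrite /krep (eq_pick (same_ker^~ x)). Qed.

Definition kernel_retraction (C X : FDS) (h : {ffun carrier C -> carrier X}) :
  {ffun carrier C -> carrier C} := [ffun x => krep h x].

(* [r] maps each point to the [krep]-representative of its [r]-class, and these
   classes are compatible with [dyn]; [fds_quotient r] is the quotient of [C] by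
   them, realised on the fixed points of [r]. *)
Definition quotient_retraction (C : FDS) (r : {ffun carrier C -> carrier C}) : bool :=
  [forall x, krep r x == r x] && [forall x, r (dyn C (r x)) == r (dyn C x)].

Definition fds_quotient (C : FDS) (r : {ffun carrier C -> carrier C}) : FDS :=
  @fds_restrict (@mkFDS (carrier C) (fun x => r (dyn C x))) [set x | r x == x].

Definition nhom_with_kernel (C X : FDS) (r : {ffun carrier C -> carrier C}) : nat :=
  #|[set h : {ffun carrier C -> carrier X} | is_hom h && (kernel_retraction h == r)]|.

Lemma kernel_retraction_quotient (C X : FDS) (h : {ffun carrier C -> carrier X}) :
  is_hom h -> quotient_retraction (kernel_retraction h).
Proof.
move=> /is_homP h_hom; apply/andP; split; apply/forallP => x; rewrite !ffunE.
  rewrite (eq_krep (h2 := h)) // => y z; rewrite !ffunE.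
  by apply/eqP/eqP => [/krep_inj | /krep_eq].
by apply/eqP/krep_eq; rewrite !h_hom krep_spec.
Qed.

Lemma nhom_with_kernel_non_quotient (C X : FDS) (r : {ffun carrier C -> carrier C}) :
  ~~ quotient_retraction r -> nhom_with_kernel X r = 0.
Proof.
move=> r_nq; apply/eqP; rewrite cards_eq0; apply/eqP/setP => h; rewrite !inE.
by apply/negP => /andP[h_hom /eqP h_ker]; move: r_nq; rewrite -h_ker kernel_retraction_quotient.
Qed.

Lemma nhom_with_kernel_id (C X : FDS) : nhom_with_kernel X [ffun x : carrier C => x] = ninj C X.
Proof.
apply: eq_card => h; rewrite !inE; congr andb; apply/eqP/injectiveP => [/ffunP h_ker x y hxy | h_inj].
  by have := h_ker x; have := h_ker y; rewrite !ffunE => <- <-; apply: krep_eq.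
by apply/ffunP => x; rewrite !ffunE; apply: h_inj; rewrite krep_spec.
Qed.

Section Quotient.
Variables (C : FDS) (r : {ffun carrier C -> carrier C}).
Hypothesis r_krep : forall x, krep r x = r x.
Hypothesis r_congr : forall x, r (dyn C (r x)) = r (dyn C x).

Lemma retraction_idem x : r (r x) = r x.
Proof. by have := krep_spec r x; rewrite r_krep. Qed.

Lemma retraction_fixed x : r x \in [set y | r y == y].
Proof. by rewrite inE retraction_idem. Qed.

Definition quotient_proj x : carrier (fds_quotient r) := Sub (r x) (retraction_fixed x).

Lemma quotient_projK (q : carrier (fds_quotient r)) : quotient_proj (val q) = q.
Proof. by apply: val_inj => /=; move: (valP q); rewrite inE => /eqP. Qed.

Lemma quotient_proj_eq x y : (quotient_proj x == quotient_proj y) = (r x == r y).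
Proof. by rewrite -val_eqE. Qed.

Lemma val_dyn_quotient (q : carrier (fds_quotient r)) :
  val (dyn (fds_quotient r) q) = r (dyn C (val q)).
Proof. by rewrite val_dyn_restrict //; apply: retraction_fixed. Qed.

Lemma quotient_proj_hom x : quotient_proj (dyn C x) = dyn (fds_quotient r) (quotient_proj x).
Proof. by apply: val_inj; rewrite val_dyn_quotient /= r_congr. Qed.

Lemma nhom_with_kernel_quotient X : nhom_with_kernel X r = ninj (fds_quotient r) X.
Proof.
pose lift (g : {ffun carrier (fds_quotient r) -> carrier X}) : {ffun carrier C -> carrier X} :=
  [ffun x => g (quotient_proj x)].
have lift_inj : injective lift.
  by move=> g1 g2 /ffunP E; apply/ffunP => q; have := E (val q); rewrite !ffunE quotient_projK.
rewrite /nhom_with_kernel /ninj -(card_imset _ lift_inj); apply: eq_card => h; rewrite !inE.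
apply/andP/imsetP => [[/is_homP h_hom /eqP h_ker] | [g + ->]].
  have r_h x : r x = krep h x by rewrite -h_ker ffunE.
  exists [ffun q => h (val q)]; last by apply/ffunP => x; rewrite !ffunE /= r_h krep_spec.
  rewrite inE; apply/andP; split.
    by apply/is_homP => q; rewrite !ffunE val_dyn_quotient r_h krep_spec h_hom.
  apply/injectiveP => q1 q2; rewrite !ffunE => /krep_eq; rewrite -!r_h => /eqP.
  by rewrite -quotient_proj_eq !quotient_projK => /eqP.
rewrite inE => /andP[/is_homP g_hom /injectiveP g_inj]; split.
  by apply/is_homP => x; rewrite !ffunE quotient_proj_hom g_hom.
apply/eqP/ffunP => x; rewrite !ffunE (eq_krep (h2 := r)) ?r_krep // => y z.
by rewrite !ffunE (inj_eq g_inj) quotient_proj_eq.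
Qed.

End Quotient.

Lemma nhom_kernel_decomposition (C X : FDS) :
  nhom C X = ninj C X + \sum_(r : {ffun carrier C -> carrier C} |
                            (r != [ffun x => x]) && quotient_retraction r) ninj (fds_quotient r) X.
Proof.
have -> : nhom C X = \sum_(r : {ffun carrier C -> carrier C}) nhom_with_kernel X r.
  rewrite /nhom -sum1_card (partition_big (@kernel_retraction C X) predT) //=.
  by apply: eq_bigr => r _; rewrite /nhom_with_kernel -sum1_card; apply: eq_bigl => h; rewrite !inE.
rewrite (bigD1 [ffun x => x]) //= nhom_with_kernel_id big_mkcondr; congr addn.
apply: eq_bigr => r _; case: ifPn => [/andP[/forallP r_krep /forallP r_congr] | r_nq].
  by apply: nhom_with_kernel_quotient => x; apply/eqP.
exact: nhom_with_kernel_non_quotient.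
Qed.

Lemma card_fds_quotient (C : FDS) (r : {ffun carrier C -> carrier C}) :
  r != [ffun x => x] -> #|carrier (fds_quotient r)| < #|carrier C|.
Proof.
move=> r_neq; rewrite card_restrict -cardsT proper_card // properT.
apply: contra r_neq => /eqP all_fixed; apply/eqP/ffunP => x; rewrite ffunE.
by move: (in_setT x); rewrite -all_fixed inE => /eqP.
Qed.

Lemma ninj_eq_of_nhom_eq (A B : FDS) :
  (forall C, nhom C A = nhom C B) -> forall C, ninj C A = ninj C B.
Proof.
move=> nhom_eq C; have [n] := ubnP #|carrier C|; elim: n C => // n IHn C; rewrite ltnS => C_le.
have := nhom_eq C; rewrite !nhom_kernel_decomposition => /eqP.
rewrite (eq_bigr (fun r => ninj (fds_quotient r) B)) ?eqn_add2r => [/eqP // | r /andP[r_neq _]].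
exact/IHn/(leq_trans (card_fds_quotient r_neq)).
Qed.

Lemma ninj_self_gt0 (X : FDS) : 0 < ninj X X.
Proof.
apply/card_gt0P; exists [ffun x => x]; rewrite inE; apply/andP; split.
  by apply/is_homP => x; rewrite !ffunE.
by apply/injectiveP => x y; rewrite !ffunE.
Qed.

Lemma ninj_gt0_card (X Y : FDS) : 0 < ninj X Y -> #|carrier X| <= #|carrier Y|.
Proof. by case/card_gt0P => h; rewrite inE => /andP[_ /injectiveP /leq_card]. Qed.

Theorem mainTheorem6 (a : seq FDS) (A B : FDS) :
  fds_iso (poly_eval a A) (poly_eval a B) ->
  (has_fixpoint (nth fds0 a 1) \/
   (exists i, 1 < i < size a /\ has_fixpoint (nth fds0 a i) /\ has_fixpoint A)) ->
  fds_iso A B.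
Proof.
move=> PAB hyp.
have [i [i_gt0 ai_fix]] : exists i, 0 < i /\ has_fixpoint (nth fds0 a i).
  case: hyp => [a1_fix | [i [/andP[i_gt1 _] [ai_fix _]]]]; first by exists 1.
  by exists i; split; first exact: ltnW.
have ninj_eq := ninj_eq_of_nhom_eq (nhom_eq_of_connected (connected_nhom_eq i_gt0 ai_fix PAB)).
have /card_gt0P[h] : 0 < ninj A B by rewrite -ninj_eq ninj_self_gt0.
rewrite inE => /andP[/is_homP h_hom /injectiveP h_inj].
exists h; split => //; apply: inj_card_bij h_inj _.
by apply: ninj_gt0_card; rewrite ninj_eq ninj_self_gt0.
Qed.
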